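(* For the ternary soft heap with error parameter $0<\epsilon<1$, any sequence of operations consisting of $N$ insertions and $\delta$ extract-min operations takes total time $O(N+\delta\lg\frac1\epsilon)$ (for $\epsilon\le 1/2$); that is, \textsf{insert} takes amortized $O(1)$ time and \textsf{extract-min} amortized $O(\lg\frac1\epsilon)$ time.
   Context: Ternary soft heap with error parameter $0<\epsilon<1$ and threshold $r_0=\max(2,\lceil\lg(1/\epsilon)\rceil)$ ($\lg$ = binary logarithm). Items are (key, value) pairs with distinct keys from a totally ordered universe. A rank-$r$ tree is a perfectly balanced rooted tree in which every internal node has exactly $3$ children and all $3^r$ leaves are at depth $r$; a node whose subtree has height $r$ has rank $r$. Each leaf corresponds to a distinct insertion. Each node holds at most one item (it may be empty); the tree is heap-ordered (an item's key is at most the keys of items at descendants). Each item $e$ held at a node carries a corruption-set $C(e)$ (empty when inserted), stored as a cyclic linked list allowing constant-time concatenation. The heap is a list of trees in nondecreasing rank order, with at most $2$ trees of each rank, together with, for each root, a suffix-min reference to the root with minimum item among it and all later roots. \textsf{insert}$(e)$: add a rank-$0$ tree holding $e$ at the front; while the first three trees have equal rank $r$, link them: create a new node of rank $r+1$ with the three roots as children and fill it; then update the suffix-min reference of the first tree. Filling an empty node $v$ of rank $r$: a single pull moves to $v$ the minimum-key item among $v$'s children and then recursively fills the child it came from (a node whose subtree holds no items stays empty). If $r\le r_0$, $v$ is filled by one pull; if $r>r_0$, two items $e_1,e_2$ with $\mathrm{key}(e_1)\le\mathrm{key}(e_2)$ are pulled up successively, $e_1$ and all of $C(e_1)$ are added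 to $C(e_2)$ ($e_1$ becomes corrupted), and $e_2$ is stored at $v$ (if only one item is available, it is stored). \textsf{extract-min}: let $e$ be the minimum-key item among roots (found via the first suffix-min reference); if $C(e)\neq\emptyset$, remove and return an item of $C(e)$ with current key $\mathrm{key}(e)$; otherwise remove $e$, refill its root, update the suffix-min references from that root back to the front of the list, and return $e$ with the corruptions created. *)

From mathcomp Require Import all_boot all_order.
From Stdlib Require Import Reals ZArith.

Set Implicit Arguments.
Unset Strict Implicit.
Unset Printing Implicit Defensive.

Definition lg (x : R) : R := (ln x / ln 2)%R.

(* ceiling on Stdlib reals: up r is the integer with r < up r <= r + 1,
   so floor r = up r - 1 and ceil x = - floor (- x) = 1 - up (- x). *)
Definition Rceil (x : R) : Z := (1 - up (- x))%Z.

Definition r0_of (eps : R) : nat := maxn 2 (Z.to_nat (Rceil (lg (/ eps)))).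

Section SoftHeap.
Context {disp : Order.disp_t} (T : orderType disp) (V : Type).

(* An item: its (original) key, its value, and its corruption set C(e),
   a list of corrupted (original key, value) pairs whose current key is
   the key of the item holding them. *)
Record item := Item { ikey : T; ival : V; icset : seq (T * V) }.

Inductive tree :=
| Leaf of option item
| Node of option item & tree & tree & tree.

Definition root (t : tree) : option item :=
  match t with Leaf o => o | Node o _ _ _ => o end.

(* rank = height of the subtree *)
Fixpoint height (t : tree) : nat :=
  match t with
  | Leaf _ => 0
  | Node _ a b c => (maxn (height a) (maxn (height b) (height c))).+1
  end.

Definition le_opt (o1 o2 : option item) : bool :=
  match o1, o2 with
  | Some e1, Some e2 => (ikey e1 <= ikey e2)%O
  | Some _, None => true
  | None, _ => false
  end.

Definition pull (f : tree -> tree * nat) (a b c : tree)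
  : option item * tree * tree * tree * nat :=
  let ra := root a in let rb := root b in let rc := root c in
  if le_opt ra rb && le_opt ra rc then
    let: (a', k) := f a in (ra, a', b, c, k.+1)
  else if le_opt rb rc then
    let: (b', k) := f b in (rb, a, b', c, k.+1)
  else if rc is Some _ then
    let: (c', k) := f c in (rc, a, b, c', k.+1)
  else (None, a, b, c, 1).

Variable r0 : nat.

(* Filling a node (whose current item is discarded / assumed empty),
   with fuel [n] (enough fuel is the height of the tree). *)
Fixpoint fill (n : nat) (t : tree) : tree * nat :=
  match t with
  | Leaf _ => (Leaf None, 1)
  | Node _ a b c =>
    match n with
    | 0 => (Node None a b c, 1)
    | n'.+1 =>
      let: (e1, a1, b1, c1, k1) := pull (fill n') a b c in
      if height t <= r0 then (Node e1 a1 b1 c1, k1.+1)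
      else
        match e1 with
        | None => (Node None a1 b1 c1, k1.+1)
        | Some x1 =>
          let: (e2, a2, b2, c2, k2) := pull (fill n') a1 b1 c1 in
          match e2 with
          | None => (Node (Some x1) a2 b2 c2, (k1 + k2).+1)
          | Some x2 =>
            (* e1 becomes corrupted: e1 and C(e1) are added to C(e2) *)
            (Node (Some (Item (ikey x2) (ival x2)
                             (icset x2 ++ (ikey x1, ival x1) :: icset x1)))
                  a2 b2 c2, (k1 + k2).+1)
          end
        end
    end
  end.

Definition fillt (t : tree) : tree * nat := fill (height t) t.

Definition set_root (o : option item) (t : tree) : tree :=
  match t with Leaf _ => Leaf o | Node _ a b c => Node o a b c end.

(* A heap is the list of trees, in nondecreasing rank order. Suffix-min
   references are not stored explicitly: they are determined by the roots,
   and their maintenance cost is charged explicitly below. *)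
Definition heap := seq tree.

(* Repeated linking of the first three trees while they have equal rank
   (fuel n; size of the list + 1 suffices).  Cost: 1 per test, plus the
   cost of filling each newly created node. *)
Fixpoint links (n : nat) (h : heap) : heap * nat :=
  match n with
  | 0 => (h, 1)
  | n'.+1 =>
    match h with
    | t1 :: t2 :: t3 :: rest =>
      if (height t1 == height t2) && (height t2 == height t3) then
        let: (t, c) := fillt (Node None t1 t2 t3) in
        let: (h', c') := links n' (t :: rest) in (h', (c + c').+1)
      else (h, 1)
    | _ => (h, 1)
    end
  end.

(* insert: add a rank-0 tree at the front, link, then update the suffix-min
   reference of the first tree (cost 1). *)
Definition insert (k : T) (v : V) (h : heap) : heap * nat :=
  let: (h', c) := links (size h).+1 (Leaf (Some (Item k v [::])) :: h) in
  (h', c.+1).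

Fixpoint minr (h : heap) : option (nat * item) :=
  match h with
  | [::] => None
  | t :: h' =>
    match root t, minr h' with
    | None, None => None
    | None, Some (i, e) => Some (i.+1, e)
    | Some x, None => Some (0, x)
    | Some x, Some (i, e) =>
      if (ikey x <= ikey e)%O then Some (0, x) else Some (i.+1, e)
    end
  end.

(* Finding the minimum uses the first suffix-min
   reference (cost 1).  If C(e) is nonempty an item of it is removed in
   constant time; otherwise e is removed, its root (the i-th tree) is
   refilled, and the suffix-min references of the trees 0..i are updated
   (cost i+1). *)
Definition extract (h : heap) : option (T * V) * heap * nat :=
  match minr h with
  | None => (None, h, 1)
  | Some (i, e) =>
    match icset e with
    | p :: cs =>
      (Some (ikey e, p.2),
       set_nth (Leaf None) h i
               (set_root (Some (Item (ikey e) (ival e) cs))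
                         (nth (Leaf None) h i)), 1)
    | [::] =>
      let: (t', c) := fillt (nth (Leaf None) h i) in
      (Some (ikey e, ival e), set_nth (Leaf None) h i t', (c + i.+1).+1)
    end
  end.

End SoftHeap.

Inductive op {disp : Order.disp_t} (T : orderType disp) (V : Type) :=
| OpInsert of T & V
| OpExtractMin.
Arguments OpExtractMin {disp T V}.

Section Run.
Context {disp : Order.disp_t} (T : orderType disp) (V : Type).

Fixpoint run_cost (r0 : nat) (h : heap T V) (ops : seq (op T V)) : nat :=
  match ops with
  | [::] => 0
  | OpInsert k v :: ops' =>
    let: (h', c) := insert r0 k v h in c + run_cost r0 h' ops'
  | OpExtractMin :: ops' =>
    let: (_, h', c) := extract r0 h in c + run_cost r0 h' ops'
  end.

Definition total_time (eps : R) (ops : seq (op T V)) : nat :=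
  run_cost (r0_of eps) [::] ops.

Definition inserted_keys (ops : seq (op T V)) : seq T :=
  pmap (fun o => if o is OpInsert k _ then Some k else None) ops.

Definition num_inserts (ops : seq (op T V)) : nat := size (inserted_keys ops).

Definition num_extracts (ops : seq (op T V)) : nat :=
  count (fun o => if o is OpExtractMin then true else false) ops.

End Run.

(* The proof is a potential-function argument, with r0 the corruption
   threshold.
   - Tree potential.  A node of rank h carries [slot_credit] = 8 r0 for each
     unused place of its corruption capacity 2^(h-r0) - 1; an item at rank
     h >= r0 carries the item credit 2^(h-r0) (2 r0 + 4); a node of rank
     h > r0 with items below keeps one item credit in reserve.  Filling a node
     of rank h then costs at most [fill_bound h] = O(r0) amortized
     ([fill_spec]): below r0 a pull costs a small rank-dependent amount, above
     r0 the doubling of the item credit and the slot credits released by a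
     corruption pay for the second pull.
   - Heap potential.  A tree of rank r keeps 20 * 3^r minus the cost of the
     links that built it; this is nonnegative since link costs grow like
     2^rank while leaves number 3^rank ([build_cost_le]).  Linking is thus
     free and insertion costs 22 amortized ([insert_spec]).
   - Extract-min frees the credit of the extracted item, which pays for the
     refill and the O(rank) suffix-min updates: 10 r0 amortized
     ([extract_spec]).
   Summing over the run ([run_spec]) and bounding r0 <= 2 lg(1/eps) gives the
   theorem with constant 30. *)

From Pilot Require Import Defs.
From Stdlib Require Import Reals ZArith Lra Psatz.
From mathcomp Require Import all_boot all_order zify.

Set Implicit Arguments.
Unset Strict Implicit.
Unset Printing Implicit Defensive.

(* Used to compare the 2^rank growth of link costs with the 3^rank leaves. *)
Lemma pow3_ge k : 2 <= k -> 4 * k + 1 <= 3 ^ k.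
Proof.
elim: k => [|k IH] // k_ge.
have [-> //|k_ge2] : k = 1 \/ 2 <= k by lia.
by have := IH k_ge2; rewrite expnS; lia.
Qed.

(* No three consecutive equal entries (in a rank sequence: at most two
   trees of each rank). *)
Fixpoint no_three_equal (s : seq nat) : bool :=
  if s is a :: s' then
    (if s' is b :: c :: _ then ~~ ((a == b) && (b == c)) else true) && no_three_equal s'
  else true.

(* After linking the three leading trees of rank r, the rank sequence stays
   sorted: no tree of rank r remains behind them. *)
Lemma link_sorted r s : sorted leq [:: r, r, r & s] -> no_three_equal [:: r, r & s] ->
  sorted leq (r.+1 :: s).
Proof.
case: s => [|x s] //= /and3P[_ _ /andP[rx px]] /andP[/negP nt _].
rewrite px andbT ltn_neqAle rx andbT; apply/negP => /eqP E; apply: nt.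
by rewrite E !eqxx.
Qed.

Lemma sorted_index_bound (s : seq nat) m i : sorted leq s -> no_three_equal s ->
  all (leq m) s -> i < size s -> 2 * m + i <= 2 * nth 0 s i + 1.
Proof.
elim/ltn_ind: i s m => i IH s m sorted_s no3 all_m lt_i.
case: i IH lt_i => [|[|j]] IH lt_i.
- by case: s sorted_s no3 all_m lt_i => [|a s] //= _ _ /andP[ma _] _; lia.
- by case: s sorted_s no3 all_m lt_i => [|a [|b s]] //= /andP[ab _] _ /and3P[ma _ _] _; lia.
case: s sorted_s no3 all_m lt_i => [|a [|b [|c s]]] //=.
move=> /and3P[ab bc sorted_cs] /andP[/negP not3 /andP[_ no3']] /and4P[ma mb mc _] lt_j.
have m_lt_c : m < c.
  rewrite ltn_neqAle mc andbT; apply/negP => /eqP m_eq_c; apply: not3.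
  by apply/andP; split; apply/eqP; lia.
have all_ge : all (leq m.+1) (c :: s).
  rewrite /= m_lt_c; apply/allP => x xs; apply: leq_trans m_lt_c _.
  by move: sorted_cs => /(order_path_min leq_trans) /allP /(_ x xs).
by have := IH j (ltnW (ltnSn j.+1)) (c :: s) m.+1 sorted_cs no3' all_ge lt_j; lia.
Qed.

Section Potential.
Context {disp : Order.disp_t} (T : orderType disp) (V : Type).
Variable r0 : nat.
Hypothesis r0_ge2 : 2 <= r0.

Local Notation tree := (tree T V).
Local Notation item := (item T V).

(* Corruption capacity of a rank-h node: an item stored at rank h has at most
   2^(h-r0) - 1 corrupted items in its set (0 at ranks <= r0). *)
Definition ccap h := 2 ^ (h - r0) - 1.

Definition item_credit h := if r0 <= h then 2 ^ (h - r0) * (2 * r0 + 4) else 0.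

Definition slot_credit := 8 * r0.

Definition csize (e : item) := size (icset e).

Definition node_pot h (o : option item) :=
  match o with
  | Some e => item_credit h + slot_credit * (ccap h - csize e)
  | None => slot_credit * ccap h
  end.

Definition has_item (a b c : tree) :=
  [|| isSome (Defs.root a), isSome (Defs.root b) | isSome (Defs.root c)].

(* A node of rank h > r0 whose subtree still holds items keeps a reserve of
   one item credit, paying for the second pull of its next fill. *)
Definition pull_reserve h (a b c : tree) :=
  if (r0 < h) && has_item a b c then item_credit h else 0.

Fixpoint tree_pot (t : tree) : nat :=
  match t with
  | Leaf o => node_pot 0 o
  | Node o a b c =>
      node_pot (height a).+1 o + pull_reserve (height a).+1 a b c
      + tree_pot a + tree_pot b + tree_pot c
  end.

Definition ok_item h (o : option item) :=
  if o is Some e then csize e <= ccap h else true.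

Fixpoint wf_tree (t : tree) : bool :=
  match t with
  | Leaf o => ok_item 0 o
  | Node o a b c =>
      [&& wf_tree a, wf_tree b, wf_tree c, height a == height b,
          height b == height c & ok_item (height a).+1 o]
  end.

Definition fill_bound h := if h < r0 then 2 * h + 1 else 4 * r0 + 5.

Lemma ccap_low h : h <= r0 -> ccap h = 0.
Proof. by move=> le_h; rewrite /ccap; have ->: h - r0 = 0 by lia. Qed.

Lemma ccap_S h : r0 <= h -> ccap h.+1 = (ccap h).*2.+1.
Proof.
move=> le_h; rewrite /ccap; have ->: h.+1 - r0 = (h - r0).+1 by lia.
rewrite expnS; have := expn_gt0 2 (h - r0); lia.
Qed.

Lemma ccap_mono h : ccap h <= ccap h.+1.
Proof.
case: (leqP r0 h) => le_h; last by rewrite ccap_low // ltnW.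
by rewrite ccap_S //; lia.
Qed.

Lemma item_credit_S h : r0 <= h -> item_credit h.+1 = (item_credit h).*2.
Proof.
move=> le_h; rewrite /item_credit le_h; have ->: r0 <= h.+1 by lia.
have ->: h.+1 - r0 = (h - r0).+1 by lia. rewrite expnS; lia.
Qed.

Lemma item_credit_ge h : r0 <= h -> 2 * r0 + 4 <= item_credit h.
Proof. move=> le_h; rewrite /item_credit le_h; have := expn_gt0 2 (h - r0); nia. Qed.

Lemma item_credit_low h : h < r0 -> item_credit h = 0.
Proof. by move=> lt_h; rewrite /item_credit; case: leqP => //; lia. Qed.

Lemma pull_reserve_le h (a b c : tree) : pull_reserve h a b c <= item_credit h.
Proof. by rewrite /pull_reserve; case: ifP. Qed.

Lemma pull_reserve_empty h (a b c : tree) : ~~ has_item a b c -> pull_reserve h a b c = 0.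
Proof. by move=> /negbTE no_item; rewrite /pull_reserve no_item andbF. Qed.

Lemma wf_children o (a b c : tree) : wf_tree (Node o a b c) ->
  [/\ wf_tree a, wf_tree b, wf_tree c, height b = height a & height c = height a].
Proof. by case/and5P=> wa wb wc /eqP <- /andP[/eqP <- _]. Qed.

Lemma wf_max o (a b c : tree) : wf_tree (Node o a b c) ->
  maxn (height a) (maxn (height b) (height c)) = height a.
Proof. by case/wf_children=> _ _ _ -> ->; rewrite !maxnn. Qed.

Lemma wf_node o (a b c : tree) m : wf_tree a -> wf_tree b -> wf_tree c ->
  height a = m -> height b = m -> height c = m -> ok_item m.+1 o ->
  wf_tree (Node o a b c) /\ height (Node o a b c) = m.+1.
Proof. by move=> wa wb wc ha hb hc ok; rewrite /= wa wb wc ha hb hc eqxx ok !maxnn. Qed.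

Lemma root_ok t : wf_tree t -> ok_item (height t) (Defs.root t).
Proof.
case: t => [o|o a b c] //= wt; rewrite (wf_max wt).
by case/and5P: wt => _ _ _ _ /andP[].
Qed.

Lemma tree_pot_set_root t o : wf_tree t ->
  tree_pot (set_root o t) + node_pot (height t) (Defs.root t)
  = tree_pot t + node_pot (height t) o.
Proof. by case: t => [o'|o' a b c] /= => [|wt]; rewrite ?(wf_max wt) /=; lia. Qed.

Lemma wf_set_root t o : wf_tree t -> ok_item (height t) o -> wf_tree (set_root o t).
Proof.
case: t => [o'|o' a b c] //= wt; rewrite (wf_max wt).
by case/and5P: wt => -> -> -> -> /andP[-> _] ->.
Qed.

Lemma height_set_root (t : tree) o : height (set_root o t) = height t.
Proof. by case: t. Qed.

Lemma pull_shape (f : tree -> tree * nat) (a b c : tree) :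
  (~~ has_item a b c /\ pull f a b c = (None, a, b, c, 1))
  \/ (exists x, Defs.root a = Some x /\ pull f a b c = (Some x, (f a).1, b, c, (f a).2.+1))
  \/ (exists x, Defs.root b = Some x /\ pull f a b c = (Some x, a, (f b).1, c, (f b).2.+1))
  \/ (exists x, Defs.root c = Some x /\ pull f a b c = (Some x, a, b, (f c).1, (f c).2.+1)).
Proof.
rewrite /pull /has_item.
case: (Defs.root a) => [xa|]; case: (Defs.root b) => [xb|]; case: (Defs.root c) => [xc|];
  rewrite /=; repeat case: ifP => _;
  case: (f a) => ? ?; case: (f b) => ? ?; case: (f c) => ? ?;
  solve [ by left | by right; left; eexists | by right; right; left; eexists
        | by right; right; right; eexists ].
Qed.

Definition fill_post m (t : tree) (r : tree * nat) :=
  [/\ wf_tree r.1, height r.1 = m &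
      r.2 + tree_pot r.1 <= tree_pot (set_root None t) + fill_bound m].

Definition fill_ok m :=
  forall t : tree, wf_tree t -> height t = m -> fill_post m t (fill r0 m t).

(* Pulling the root item x out of a child X: the refilled child loses the
   credit of x but regains the slot credits of the corruption set of x. *)
Lemma pull_child m (X : tree) x :
  fill_ok m -> wf_tree X -> height X = m -> Defs.root X = Some x ->
  [/\ wf_tree (fill r0 m X).1, height (fill r0 m X).1 = m, csize x <= ccap m &
      (fill r0 m X).2 + tree_pot (fill r0 m X).1 + item_credit m
      <= tree_pot X + slot_credit * csize x + fill_bound m].
Proof.
move=> fill_m wX hX rX; have [w' h' cost] := fill_m X wX hX.
have ok := root_ok wX; rewrite rX hX /= in ok.
have E := tree_pot_set_root None wX; rewrite rX hX /= mulnBr in E.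
have : slot_credit * csize x <= slot_credit * ccap m by rewrite leq_mul2l ok orbT.
by split=> //; lia.
Qed.

Definition pull_post m (a b c : tree) (r : option item * tree * tree * tree * nat) :=
  match r with
  | (None, a', b', c', k) => [/\ ~~ has_item a b c, a' = a, b' = b, c' = c & k = 1]
  | (Some x, a', b', c', k) =>
      [/\ has_item a b c, [&& wf_tree a', wf_tree b' & wf_tree c'],
          [/\ height a' = m, height b' = m & height c' = m], csize x <= ccap m &
          k + tree_pot a' + tree_pot b' + tree_pot c' + item_credit m
          <= tree_pot a + tree_pot b + tree_pot c + slot_credit * csize x + 1 + fill_bound m]
  end.

Lemma pull_spec m (a b c : tree) : fill_ok m ->
  wf_tree a -> wf_tree b -> wf_tree c -> height a = m -> height b = m -> height c = m ->
  pull_post m a b c (pull (fill r0 m) a b c).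
Proof.
move=> fill_m wa wb wc ha hb hc.
case: (pull_shape (fill r0 m) a b c) => [[no_item ->] //|[[x [rx ->]]|[[x [rx ->]]|[x [rx ->]]]]].
- have [w' h' cx cost] := pull_child fill_m wa ha rx.
  by split; rewrite /= ?w' ?wb ?wc /has_item ?rx //; lia.
- have [w' h' cx cost] := pull_child fill_m wb hb rx.
  by split; rewrite /= ?w' ?wa ?wc /has_item ?rx ?orbT //; lia.
- have [w' h' cx cost] := pull_child fill_m wc hc rx.
  by split; rewrite /= ?w' ?wa ?wb /has_item ?rx ?orbT //; lia.
Qed.

Lemma pull_reserve_low h (a b c : tree) : h <= r0 -> pull_reserve h a b c = 0.
Proof. by move=> le_h; rewrite /pull_reserve ltnNge le_h. Qed.

(* Below r0 the fill bound grows by 2 per rank, which pays for the new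
   pull and, at rank r0, for the first item credit. *)
Lemma fill_bound_low_step n : n < r0 ->
  item_credit n.+1 + fill_bound n + 2 <= fill_bound n.+1.
Proof.
move=> lt_n; rewrite /fill_bound /item_credit lt_n.
by case: (ltngtP n.+1 r0) => [| |<-]; rewrite ?subnn; lia.
Qed.

Lemma fill_bound_ge2 n : 2 <= fill_bound n.+1.
Proof. by rewrite /fill_bound; case: ifP; lia. Qed.

Lemma fill_bound_high n : r0 <= n -> fill_bound n = 4 * r0 + 5.
Proof. by move=> le_n; rewrite /fill_bound ltnNge le_n. Qed.

Lemma pull_reserve_high h (a b c : tree) :
  r0 < h -> has_item a b c -> pull_reserve h a b c = item_credit h.
Proof. by move=> lt_h has_abc; rewrite /pull_reserve lt_h has_abc. Qed.

Lemma slot_credit_ge : 4 * r0 + 8 <= slot_credit.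
Proof. by rewrite /slot_credit; lia. Qed.

Definition absorb (x1 x2 : item) :=
  Item (ikey x2) (ival x2) (icset x2 ++ (ikey x1, ival x1) :: icset x1).

Lemma csize_absorb x1 x2 : csize (absorb x1 x2) = csize x2 + csize x1 + 1.
Proof. by rewrite /csize size_cat /= addnS addn1. Qed.

Section FillNode.
Variables (n : nat) (o : option item) (a b c : tree).
Hypothesis ha : height a = n.

Lemma fill_node_empty a1 b1 c1 k1 :
  wf_tree (Node o a b c) -> pull_post n a b c (None, a1, b1, c1, k1) ->
  fill_post n.+1 (Node o a b c) (Node None a1 b1 c1, k1.+1).
Proof.
move=> wt [_ -> -> -> ->]; have [wa wb wc hb hc] := wf_children wt.
have [wN hN] := wf_node (o := None) wa wb wc ha (etrans hb ha) (etrans hc ha) isT.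
by split=> //=; have := fill_bound_ge2 n; lia.
Qed.

Lemma fill_node_low x a1 b1 c1 k1 : n < r0 ->
  pull_post n a b c (Some x, a1, b1, c1, k1) ->
  fill_post n.+1 (Node o a b c) (Node (Some x) a1 b1 c1, k1.+1).
Proof.
move=> lt_n [_ /and3P[w1 w2 w3] [h1 h2 h3] cx cost].
have cap_n : ccap n = 0 by rewrite ccap_low // ltnW.
have cap_n1 : ccap n.+1 = 0 by rewrite ccap_low.
have no_corr : csize x = 0 by move: cx; rewrite cap_n; lia.
have ok : ok_item n.+1 (Some x) by rewrite /= cap_n1 no_corr.
have [wN hN] := wf_node (o := Some x) w1 w2 w3 h1 h2 h3 ok.
split=> //=; rewrite h1 ha !pull_reserve_low // cap_n1.
move: cost; rewrite item_credit_low // no_corr; have := fill_bound_low_step lt_n; lia.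
Qed.

(* The reserve
   of the node, no longer needed, pays for the doubled credit of the item,
   and the old credit of the item for the failed second pull. *)
Lemma fill_node_one x1 a1 b1 c1 k1 a2 b2 c2 k2 : r0 <= n ->
  pull_post n a b c (Some x1, a1, b1, c1, k1) ->
  pull_post n a1 b1 c1 (None, a2, b2, c2, k2) ->
  fill_post n.+1 (Node o a b c) (Node (Some x1) a2 b2 c2, (k1 + k2).+1).
Proof.
move=> le_n [has1 /and3P[w1 w2 w3] [h1 h2 h3] cx1 cost1] [no2 -> -> -> ->].
have cx1' : csize x1 <= ccap n.+1 := leq_trans cx1 (ccap_mono n).
have [wN hN] := wf_node (o := Some x1) w1 w2 w3 h1 h2 h3 cx1'.
have reserve : pull_reserve n.+1 a b c = item_credit n.+1 by apply: pull_reserve_high.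
split=> //=; rewrite h1 ha reserve pull_reserve_empty // mulnBr.
have : slot_credit * csize x1 <= slot_credit * ccap n.+1 by rewrite leq_mul2l cx1' orbT.
have := item_credit_ge le_n; move: cost1.
by rewrite !fill_bound_high //; [lia | apply: leqW].
Qed.

(* The credits
   of the two pulled items make up the doubled credit of the new root item,
   and the slot credit of the newly used corruption slot pays for the pulls. *)
Lemma fill_node_two x1 a1 b1 c1 k1 x2 a2 b2 c2 k2 : r0 <= n ->
  pull_post n a b c (Some x1, a1, b1, c1, k1) ->
  pull_post n a1 b1 c1 (Some x2, a2, b2, c2, k2) ->
  fill_post n.+1 (Node o a b c) (Node (Some (absorb x1 x2)) a2 b2 c2, (k1 + k2).+1).
Proof.
move=> le_n [has1 _ _ cx1 cost1] [_ /and3P[w1 w2 w3] [h1 h2 h3] cx2 cost2].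
have cx : csize (absorb x1 x2) <= ccap n.+1 by rewrite csize_absorb ccap_S //; lia.
have [wN hN] := wf_node (o := Some (absorb x1 x2)) w1 w2 w3 h1 h2 h3 cx.
have reserve : pull_reserve n.+1 a b c = item_credit n.+1 by apply: pull_reserve_high.
split=> //=; rewrite h1 ha reserve mulnBr.
have : slot_credit * csize (absorb x1 x2) <= slot_credit * ccap n.+1
  by rewrite leq_mul2l cx orbT.
have := pull_reserve_le n.+1 a2 b2 c2; have := slot_credit_ge.
rewrite csize_absorb !mulnDr muln1 item_credit_S //.
move: cost1 cost2; rewrite !fill_bound_high //; last exact: leqW.
lia.
Qed.

End FillNode.

Lemma fill_spec m : fill_ok m.
Proof.
elim: m => [|n IH] [o|o a b c] wt //= => [_|].
  by split=> //=; rewrite /fill_bound (ltnW r0_ge2); lia.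
rewrite (wf_max wt) => -[ha].
have [wa wb wc hb hc] := wf_children wt; rewrite ha in hb hc *.
have P1 := pull_spec IH wa wb wc ha hb hc.
case: (pull (fill r0 n) a b c) P1 => [[[[[x1|] a1] b1] c1] k1] P1; last first.
  by rewrite if_same; apply: fill_node_empty.
case: ltnP => [low|high]; first exact: fill_node_low.
have [_ /and3P[w1 w2 w3] [h1 h2 h3] _ _] := P1.
have P2 := pull_spec IH w1 w2 w3 h1 h2 h3.
case: (pull (fill r0 n) a1 b1 c1) P2 => [[[[[x2|] a2] b2] c2] k2] P2.
- exact: fill_node_two P1 P2.
- exact: fill_node_one P1 P2.
Qed.

(* Cost of a link creating a rank-h node: the test, the fill, and the
   potential the new node must carry (its empty slots and its reserve). *)
Definition link_cost h := 1 + fill_bound h + slot_credit * ccap h + item_credit h.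

(* Total link cost spent to build a rank-r tree from its 3^r leaves. *)
Fixpoint build_cost r := if r is r'.+1 then 3 * build_cost r' + link_cost r'.+1 else 0.

Lemma link_cost_low h : h < r0 -> link_cost h = 2 * h + 2.
Proof. by move=> lt_h; rewrite /link_cost /fill_bound lt_h ccap_low ?item_credit_low //; lia. Qed.

Lemma link_cost_high h : r0 <= h -> link_cost h <= 2 ^ (h - r0) * (14 * r0 + 10).
Proof.
move=> le_h; rewrite /link_cost fill_bound_high // /slot_credit /ccap /item_credit le_h.
have := expn_gt0 2 (h - r0); move: (2 ^ (h - r0)) => p p_gt0.
by rewrite mulnBr muln1; nia.
Qed.

(* Below r0 link costs are linear in the rank, so the total build cost is
   at most 3^(r+1), with room to spare. *)
Lemma build_cost_below r : r < r0 -> build_cost r + r + 3 <= 3 ^ r.+1.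
Proof.
elim: r => [|r IH] lt_r //=; have := IH (ltnW lt_r).
by rewrite link_cost_low // [3 ^ r.+2]expnS; lia.
Qed.

(* Above r0 link costs grow like 2^rank, dominated by the 3^rank leaves. *)
Lemma build_cost_above k :
  build_cost (k + r0) + (14 * r0 + 20) * 2 ^ k.+1
  <= 3 ^ (k + r0).+1 + (14 * r0 + 20) * 3 ^ k.+1.
Proof.
elim: k => [|k IH].
  have r0_gt0 : 0 < r0 by lia.
  have -> : build_cost (0 + r0) = 3 * build_cost r0.-1 + link_cost r0.
    by case: (r0) r0_gt0.
  have := @build_cost_below r0.-1 ltac:(by rewrite ltn_predL).
  have := link_cost_high (leqnn r0).
  by rewrite (prednK r0_gt0) subnn add0n [3 ^ r0.+1]expnS; lia.
have := link_cost_high (leq_addl k.+1 r0); rewrite addnK !addSn /=.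
rewrite [3 ^ (k + r0).+2]expnS [3 ^ k.+2]expnS [2 ^ k.+2]expnS.
by move: IH; move: (2 ^ k.+1) (3 ^ k.+1) (3 ^ (k + r0).+1) => p q e; nia.
Qed.

Lemma build_cost_le r : build_cost r <= 20 * 3 ^ r.
Proof.
case: (ltnP r r0) => [lt_r|le_r].
  by have := build_cost_below lt_r; rewrite expnS; lia.
rewrite -(subnK le_r); have := build_cost_above (r - r0); have := pow3_ge r0_ge2.
rewrite !expnS expnD; move: (3 ^ (r - r0)) (expn_gt0 3 (r - r0)) (3 ^ r0) => x x_gt0 y.
nia.
Qed.

(* Credit kept by a rank-r tree of the heap: what its leaves brought, minus
   what its construction spent.  Linking three trees of rank r releases
   exactly the cost of the link. *)
Definition rank_credit r := 20 * 3 ^ r - build_cost r.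

Lemma rank_credit_step r : rank_credit r.+1 + link_cost r.+1 = 3 * rank_credit r.
Proof. by have := build_cost_le r.+1; have := build_cost_le r; rewrite /rank_credit /= expnS; lia. Qed.

Lemma link_spec (t1 t2 t3 : tree) r : wf_tree t1 -> wf_tree t2 -> wf_tree t3 ->
  height t1 = r -> height t2 = r -> height t3 = r ->
  let: (t', c) := fillt r0 (Node None t1 t2 t3) in
  [/\ wf_tree t', height t' = r.+1 &
      c.+1 + rank_credit r.+1 + tree_pot t'
      <= 3 * rank_credit r + tree_pot t1 + tree_pot t2 + tree_pot t3].
Proof.
move=> w1 w2 w3 h1 h2 h3.
have [wN hN] := wf_node (o := None) w1 w2 w3 h1 h2 h3 isT.
rewrite /fillt hN; have [] := fill_spec wN hN.
case: (fill r0 r.+1 (Node None t1 t2 t3)) => t' c /= wT hT cost; split=> //.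
have := rank_credit_step r; have := pull_reserve_le r.+1 t1 t2 t3.
by move: cost; rewrite h1 /link_cost; lia.
Qed.

Fixpoint heap_pot (l : seq tree) : nat :=
  if l is t :: l' then rank_credit (height t) + tree_pot t + heap_pot l' else 0.

Definition ranks (l : seq tree) : seq nat := [seq height t | t <- l].

Definition heap_inv (l : seq tree) :=
  [&& all wf_tree l, sorted leq (ranks l) & no_three_equal (ranks l)].

Lemma links_spec n t (rest : seq tree) : size rest < n -> all wf_tree (t :: rest) ->
  sorted leq (ranks (t :: rest)) -> no_three_equal (ranks rest) ->
  heap_inv (links r0 n (t :: rest)).1 /\
  (links r0 n (t :: rest)).2 + heap_pot (links r0 n (t :: rest)).1
  <= heap_pot (t :: rest) + 1.
Proof.
elim: n t rest => [|n IH] t rest //.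
case: rest => [|t2 [|t3 rest]] size_rest w_all sorted_all no3.
- by rewrite /heap_inv /= andbT; move: w_all => /= ->; split => //; lia.
- by rewrite /heap_inv /=; move: w_all sorted_all => /= -> /= ->; split => //; lia.
rewrite /=; case: ifP => [/andP[/eqP e12 /eqP e23]|not_three]; last first.
  split; last by rewrite /=; lia.
  by rewrite /heap_inv w_all sorted_all /= not_three; move: no3 => /= ->.
move: w_all => /= /and4P[w1 w2 w3 w_rest].
have := link_spec w1 w2 w3 erefl (esym e12) (esym (etrans e12 e23)).
case: (fillt r0 (Node None t t2 t3)) => t' c [wT hT cost].
have sorted' : sorted leq (ranks (t' :: rest)).
  rewrite /= hT; apply: link_sorted; first by move: sorted_all; rewrite /= -e23 -e12.
  by move: no3; rewrite /= -e23 -e12.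
have no3' : no_three_equal (ranks rest) by move: no3 => /= /andP[_ /andP[_]].
have w_all' : all wf_tree (t' :: rest) by rewrite /= wT.
have [] := IH t' rest (ltnW size_rest) w_all' sorted' no3'.
case: (links r0 n (t' :: rest)) => l' c' /= inv' cost'; split=> //.
move: cost'; rewrite /= hT -e23 -e12 => cost'.
by move: cost cost'; clear; lia.
Qed.

(* Insertion: amortized cost 22 (twenty units of leaf credit, the final
   linking test and the suffix-min update). *)
Lemma insert_spec k v (l : seq tree) : heap_inv l ->
  heap_inv (insert r0 k v l).1 /\
  (insert r0 k v l).2 + heap_pot (insert r0 k v l).1 <= heap_pot l + 22.
Proof.
case/and3P=> w_all sorted_l no3; rewrite /insert.
have w_all' : all wf_tree (Leaf (Some (Item k v [::])) :: l) by rewrite /= w_all.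
have sorted' : sorted leq (ranks (Leaf (Some (Item k v [::])) :: l)).
  by rewrite /= path_min_sorted //; apply/allP.
have [] := links_spec (ltnSn (size l)) w_all' sorted' no3.
case: (links r0 (size l).+1 _) => l' c /= inv' cost; split=> //.
have credit0 : rank_credit 0 = 20 by [].
have ic0 : item_credit 0 = 0 by rewrite item_credit_low // ltnW.
by move: cost; rewrite credit0 ic0 ccap_low; lia.
Qed.

Lemma minr_spec (l : seq tree) i e : minr l = Some (i, e) ->
  i < size l /\ Defs.root (nth (Leaf None) l i) = Some e.
Proof.
elim: l i e => [|t l IH] i e //=.
case rt: (Defs.root t) => [x|]; case: (minr l) IH => [[j f]|] IH.
- by case: ifP => _ [<- <-] /=; [rewrite rt | exact: IH].
- by case=> <- <- /=; rewrite rt.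
- by case=> <- <-; exact: IH.
- by [].
Qed.

Lemma heap_pot_set_nth (l : seq tree) i t' : i < size l ->
  height t' = height (nth (Leaf None) l i) ->
  heap_pot (set_nth (Leaf None) l i t') + tree_pot (nth (Leaf None) l i)
  = heap_pot l + tree_pot t'.
Proof.
elim: l i => [|t l IH] [|i] //= lt_i eq_h; first by rewrite eq_h; lia.
by have := IH i lt_i eq_h; lia.
Qed.

Lemma heap_inv_set_nth (l : seq tree) i t' : i < size l -> heap_inv l -> wf_tree t' ->
  height t' = height (nth (Leaf None) l i) -> heap_inv (set_nth (Leaf None) l i t').
Proof.
move=> lt_i /and3P[w_all sorted_l no3] wt' eq_h; rewrite /heap_inv.
have -> : ranks (set_nth (Leaf None) l i t') = ranks l.
  elim: l i lt_i eq_h {w_all sorted_l no3} => [|t l IH] [|i] //= lt_i eq_h.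
    by rewrite eq_h.
  by rewrite IH.
rewrite sorted_l no3 !andbT.
elim: l i lt_i eq_h w_all {sorted_l no3} => [|t l IH] [|i] //= lt_i eq_h /andP[wt wl].
  by rewrite wt' wl.
by rewrite wt IH.
Qed.

Lemma index_bound (l : seq tree) i : heap_inv l -> i < size l ->
  i <= 2 * height (nth (Leaf None) l i) + 1.
Proof.
case/and3P=> _ sorted_l no3 lt_i.
have all0 : all (leq 0) (ranks l) by apply/allP.
have := @sorted_index_bound (ranks l) 0 i sorted_l no3 all0.
by rewrite size_map (nth_map (Leaf None)) //; move/(_ lt_i); lia.
Qed.

(* Removing the minimum item from a tree at position i frees its credit,
   which pays for refilling and for the suffix-min updates. *)
Lemma extract_slack r i : i <= 2 * r + 1 -> i + 2 + fill_bound r <= item_credit r + 10 * r0.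
Proof.
move=> le_i; rewrite /fill_bound /item_credit.
case: ltnP => [lt_r|le_r]; first lia.
by have := ltn_expl (r - r0) (ltnSn 1); move: (2 ^ (r - r0)) => p; nia.
Qed.

Lemma extract_spec (l : seq tree) : heap_inv l ->
  heap_inv (extract r0 l).1.2 /\
  (extract r0 l).2 + heap_pot (extract r0 l).1.2 <= heap_pot l + 10 * r0.
Proof.
move=> inv; rewrite /extract.
case em: (minr l) => [[i e]|]; last by split=> //=; lia.
have [lt_i root_i] := minr_spec em; set t := nth (Leaf None) l i in root_i *.
have wt : wf_tree t.
  by case/and3P: inv => /(all_nthP (Leaf None)) w_all _ _; apply: w_all.
have le_i : i <= 2 * height t + 1 := index_bound inv lt_i.
have := root_ok wt; rewrite root_i /= /csize => ok.
case ce: (icset e) => [|p cs] in ok *.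
  rewrite /fillt; have [] := fill_spec wt erefl.
  case: (fill r0 (height t) t) => t' c /= wt' ht' cost.
  split; first exact: heap_inv_set_nth.
  have := heap_pot_set_nth lt_i ht'; have := tree_pot_set_root None wt.
  rewrite root_i /= /csize ce subn0; have := extract_slack le_i.
  by move: cost; rewrite -/t; move: (height t) => r; lia.
set e' := Item (ikey e) (ival e) cs.
have ok' : ok_item (height t) (Some e') by move: ok; rewrite /= /csize /=; lia.
split; first by apply: heap_inv_set_nth; rewrite ?wf_set_root ?height_set_root.
have := heap_pot_set_nth lt_i (height_set_root t (Some e')).
have := tree_pot_set_root (Some e') wt; rewrite root_i /= /csize ce /=.
have : slot_credit * (ccap (height t) - size cs)
       = slot_credit * (ccap (height t) - (size cs).+1) + slot_credit.
  by move: ok => /= ok; rewrite -[X in _ + X]muln1 -mulnDr; congr (_ * _); lia.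
have : slot_credit + 1 <= 10 * r0 by rewrite /slot_credit; lia.
rewrite -/t; move: (slot_credit * (_ - size cs)) (slot_credit * (_ - (size cs).+1)) => A B.
lia.
Qed.

Lemma run_spec (ops : seq (op T V)) (l : seq tree) : heap_inv l ->
  run_cost r0 l ops <= heap_pot l + 22 * num_inserts ops + 10 * r0 * num_extracts ops.
Proof.
elim: ops l => [|o ops IH] l inv /=; first lia.
case: o => [k v|].
- have [] := insert_spec k v inv; case: (insert r0 k v l) => l' c /= inv' cost.
  by have := IH l' inv'; rewrite /num_inserts /num_extracts /= add0n; lia.
- have [] := extract_spec inv; case: (extract r0 l) => [[x l'] c] /= inv' cost.
  by have := IH l' inv'; rewrite /num_inserts /num_extracts /= add1n mulnS; lia.
Qed.

End Potential.

Lemma total_time_bound (disp : Order.disp_t) (T : orderType disp) (V : Type)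
    (eps : R) (ops : seq (op T V)) :
  total_time eps ops <= 22 * num_inserts ops + 10 * r0_of eps * num_extracts ops.
Proof.
have r0_ge2 : 2 <= r0_of eps by rewrite /r0_of leq_maxl.
exact: (@run_spec disp T V (r0_of eps) r0_ge2 ops [::] isT).
Qed.

(* The MathComp imports shadow the real-number notations; restore them. *)
From Stdlib Require Import Reals.

Lemma lg_inv_ge1 eps : (0 < eps)%R -> (eps <= / 2)%R -> (1 <= lg (/ eps))%R.
Proof.
move=> eps_gt0 eps_le.
have inv_ge2 : (2 <= / eps)%R.
  by rewrite -[2%R]Rinv_inv; apply: Rinv_le_contravar.
have ln2_gt0 : (0 < ln 2)%R by have := ln_lt_2; lra.
have : (ln 2 <= ln (/ eps))%R.
  case: (Rle_lt_or_eq_dec _ _ inv_ge2) => [lt2|<-]; last lra.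
  by apply: Rlt_le; apply: ln_increasing; lra.
rewrite /lg => le_ln; apply: (Rmult_le_reg_r (ln 2)) => //.
by rewrite /Rdiv Rmult_assoc Rinv_l; lra.
Qed.

Lemma r0_of_le eps : (0 < eps)%R -> (eps <= / 2)%R ->
  (INR (r0_of eps) <= 2 * lg (/ eps))%R.
Proof.
move=> eps_gt0 eps_le; have := lg_inv_ge1 eps_gt0 eps_le.
rewrite /r0_of; move: (lg (/ eps)) => L L_ge1.
have ceil_lt : (IZR (Rceil L) < 1 + L)%R.
  by rewrite /Rceil minus_IZR; have [up_gt _] := archimed (- L); lra.
have ceil_nat : (INR (Z.to_nat (Rceil L)) <= 1 + L)%R.
  move: (Rceil L) ceil_lt => z ceil_lt.
  case: (Z_le_gt_dec 0 z) => [z_ge0|z_lt0]; first by rewrite INR_IZR_INZ Z2Nat.id //; lra.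
  by case: z z_lt0 {ceil_lt} => [|p|p] //= _; lra.
by rewrite /maxn; case: ifP => _ /=; lra.
Qed.

Theorem mainTheorem12 :
  exists C : R,
    forall (disp : Order.disp_t) (T : orderType disp) (V : Type) (eps : R),
      (0 < eps)%R -> (eps <= / 2)%R ->
      forall ops : seq (op T V),
        uniq (inserted_keys ops) ->
        (INR (total_time eps ops)
           <= C * (INR (num_inserts ops) + INR (num_extracts ops) * lg (/ eps)))%R.
Proof.
exists 30%R => disp T V eps eps_gt0 eps_le ops _.
have /leP/le_INR bound := total_time_bound eps ops.
rewrite -plusE -!multE plus_INR !mult_INR /= in bound.
have := lg_inv_ge1 eps_gt0 eps_le; have := r0_of_le eps_gt0 eps_le.
have := pos_INR (num_inserts ops); have := pos_INR (num_extracts ops).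
move: bound; move: (INR (r0_of eps)) (INR (num_extracts ops)) (INR (num_inserts ops)) (lg (/ eps)).
by move=> r d n L; nra.
Qed.
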